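(* Let $V$ be a finite-dimensional complex vector space, $\dim V=N$, with a direct sum decomposition $V=U\oplus W$, and let $V_\bullet=\{0\subset V_1\subset\dots\subset V_N=V\}$ be a full flag in $V$. Then there exist bases $\{e_1,\dots,e_N\}$ and $\{v_1,\dots,v_N\}$ of $V$ such that $\{e_1,\dots,e_N\}$ is compatible with the decomposition $V=U\oplus W$, $\{v_1,\dots,v_N\}$ is compatible with the flag $V_\bullet$, and each vector $v_i$ is equal either to some $e_l$ or to a sum $e_j+e_k$ with $e_j\in U$ and $e_k\in W$.
   Context: A full flag $V_\bullet$ in $V$ is a chain of subspaces $0\subset V_1\subset\dots\subset V_N=V$ with $\dim V_i=i$. A basis of $V$ is compatible with the flag $V_\bullet$ if every $V_i$ is spanned by some subset of the basis. A basis of $V$ is compatible with the decomposition $V=U\oplus W$ if each basis vector lies in $U$ or in $W$. *)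

From HB Require Import structures.
From mathcomp Require Import all_boot all_order all_algebra.
Set Implicit Arguments. Unset Strict Implicit. Unset Printing Implicit Defensive.
Import GRing.Theory.
Local Open Scope ring_scope.

Section Defs.
Variables (F : fieldType) (V : vectType F).

Definition direct_decomposition (U W : {vspace V}) : Prop :=
  directv (U + W)%VS /\ (U + W)%VS = fullv.

(* Vs 0 ⊂ Vs 1 ⊂ ... ⊂ Vs N = V with dim (Vs i) = i (values of Vs beyond N
   are irrelevant). *)
Definition full_flag (N : nat) (Vs : nat -> {vspace V}) : Prop :=
  [/\ forall i, (i <= N)%N -> \dim (Vs i) = i,
      forall i, (i < N)%N -> (Vs i <= Vs i.+1)%VS
    & Vs N = fullv].

Definition flag_compatible (N : nat) (Vs : nat -> {vspace V})
    (b : N.-tuple V) : Prop :=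
  forall i, (i <= N)%N ->
    exists S : {set 'I_N}, Vs i = <<[seq tnth b j | j in S]>>%VS.

Definition decomp_compatible (U W : {vspace V}) (b : seq V) : Prop :=
  forall x, x \in b -> x \in U \/ x \in W.

End Defs.

(* We prove more generally: if U :&: W = 0 and X_0 < ... < X_m is a partial
   flag inside U + W, there are free families E_U of U and E_W of W and vectors
   v_i = u_i + w_i, each u_i zero or in E_U and each w_i zero or in E_W, such
   that v_1, ..., v_k span X_k for all k; completing E_U and E_W to bases of U
   and W gives e.
   If X_(m+1) contains no new vector of U or none of W modulo X_m, pick
   a + b in X_(m+1) \ X_m with a = 0 or a \notin X_m + W, and b = 0 or
   b \notin X_m + U.  Cutting U and W by hyperplanes that avoid a and b but
   still carry the components of X_m, the induction hypothesis applies to X_m,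
   and a, b join the families.
   Otherwise let k + 1 be the least j such that some w in X_(m+1) :&: W, not in
   X_m, lies in X_j + U, say u + w in X_(k+1) with u in U.  Minimality gives
   u \notin X_m + U :&: (X_k + W), so a hyperplane M through this space avoids
   u, and Z := U :&: M + W :&: M satisfies X_k <= Z and X_m <= Z + <[u + w]>.
   Removing u + w from the flag X yields a partial flag of length m - 1 inside
   Z; splitting it by induction, then inserting u + w at position k + 1 and
   appending w, splits X. *)

From HB Require Import structures.
From mathcomp Require Import all_boot all_order all_algebra.
Set Implicit Arguments. Unset Strict Implicit. Unset Printing Implicit Defensive.
Import GRing.Theory.
Local Open Scope ring_scope.

Section Subspaces.
Variables (F : fieldType) (V : vectType F).
Implicit Types (A B C H L M U W X Z : {vspace V}) (a x y u w : V) (s : seq V).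

Lemma dimv_add_line A y : y \notin A -> \dim (A + <[y]>) = (\dim A).+1.
Proof.
move=> yA; have y0 : y != 0 by apply: contraNneq yA => ->; rewrite mem0v.
rewrite dimv_disjoint_sum ?dim_vline ?y0 ?addn1 //.
apply/eqP; rewrite -subv0; apply/subvP=> x /memv_capP[xA /vlineP[k Ex]].
have [k0 | nz_k] := eqVneq k 0; first by rewrite Ex k0 scale0r mem0v.
by case/negP: yA; rewrite -(scalerK nz_k y) memvZ // -Ex.
Qed.

Lemma addv_line_eq A B y : (A <= B)%VS -> y \in B -> y \notin A ->
  \dim B = (\dim A).+1 -> B = (A + <[y]>)%VS.
Proof.
move=> sAB yB yA dimB; apply/eqP; rewrite eq_sym eqEdim subv_add sAB -memvE yB.
by rewrite dimv_add_line // dimB leqnn.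
Qed.

Lemma addv_capv_modular A B C : (C <= A)%VS -> (A <= B + C)%VS ->
  A = (A :&: B + C)%VS.
Proof.
move=> sCA sABC; apply/eqP; rewrite eqEsubv subv_add capvSl sCA !andbT.
apply/subvP=> a aA; have /memv_addP[b bB [c cC Ea]] := subvP sABC a aA.
rewrite Ea memv_add // memv_cap bB andbT.
by rewrite -[b](addrK c) -Ea memvB // (subvP sCA).
Qed.

Lemma hyperplane_avoiding L y : y \notin L ->
  exists M, [/\ (L <= M)%VS, y \notin M & (M + <[y]>)%VS = fullv].
Proof.
move=> yL; set C := (fullv :\: (L + <[y]>))%VS.
have MyF : (L + C + <[y]>)%VS = fullv.
  by rewrite [(L + C)%VS]addvC -addvA addv_diff sumfv.
exists (L + C)%VS; split=> //; first exact: addvSl.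
apply/negP=> yM; have : (\dim (L + C) < \dim (fullv : {vspace V}))%N.
  have := dimv_cap_compl fullv (L + <[y]>)%VS.
  rewrite capfv dimv_add_line // => <-.
  by rewrite addSn ltnS; apply: (dimv_add_leqif L C).
suff -> : (L + C)%VS = fullv by rewrite ltnn.
by rewrite -MyF; apply/esym/addv_idPl; rewrite -memvE.
Qed.

Lemma subv_addv_capv A U W M : (A <= U + W)%VS -> (A <= M)%VS ->
  (U :&: (A + W) <= M)%VS -> (A <= U :&: M + W :&: M)%VS.
Proof.
move=> sAUW sAM sUM; apply/subvP=> a aA.
have /memv_addP[p pU [q qW Ea]] := subvP sAUW a aA.
have pM : p \in M.
  apply: (subvP sUM); rewrite memv_cap pU -[p](addrK q) -Ea.
  by apply: memv_add; rewrite ?memvN.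
have qM : q \in M by rewrite -[q](addKr p) -Ea memvD ?memvN // (subvP sAM).
by rewrite Ea memv_add // memv_cap ?pU ?qW.
Qed.

Lemma shrink_summand H U W a :
  (H <= U + W)%VS -> (a == 0) || (a \notin (H + W)%VS) ->
  exists U', [/\ (U' <= U)%VS, (a == 0) || (a \notin U') & (H <= U' + W)%VS].
Proof.
move=> sHUW /orP[a0 | aHW]; first by exists U; rewrite a0.
have [M [sHWM aM _]] := hyperplane_avoiding aHW.
exists (U :&: M)%VS; split; first exact: capvSl.
  by rewrite memv_cap (negbTE aM) andbF orbT.
have sWM : (W <= M)%VS := subv_trans (addvSr H W) sHWM.
rewrite -(capv_idPl sWM); apply: subv_addv_capv => //.
  exact: subv_trans (addvSl H W) sHWM.
exact: subv_trans (capvSr _ _) sHWM.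
Qed.

Lemma notin_addv_summand U W U' W' u w : (U :&: W = 0)%VS ->
  (U' <= U)%VS -> (W' <= W)%VS -> u \in U -> w \in W -> u \notin U' ->
  u + w \notin (U' + W')%VS.
Proof.
move=> dUW sU sW uU wW uU'; apply/negP=> /memv_addP[p pU' [q qW' Euw]].
suff upE : u - p = 0 by case/negP: uU'; rewrite (subr0_eq upE).
apply/eqP; rewrite -memv0 -dUW memv_cap memvB ?(subvP sU _ pU') //=.
have -> : u - p = q - w by apply/eqP; rewrite subr_eq addrC addrA -Euw addrK.
by rewrite memvB ?(subvP sW _ qW').
Qed.

Lemma subv_capv_add_line H U W M u w : (H <= U + W)%VS -> (H <= M)%VS ->
  (M + <[u]>)%VS = fullv -> u \in U -> w \in W -> u + w \in M ->
  (H <= U :&: M + W :&: M + <[u + w]>)%VS.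
Proof.
move=> sHUW sHM MuF uU wW uwM; apply/subvP=> h hH.
have /memv_addP[p pU [q qW Eh]] := subvP sHUW h hH.
have /memv_addP[m mM [_ /vlineP[c ->] Ep]] : p \in (M + <[u]>)%VS.
  by rewrite MuF memvf.
have mU : m \in U by rewrite -[m](addrK (c *: u)) -Ep memvB ?memvZ.
have Eh' : h = m + (q - c *: w) + c *: (u + w).
  by rewrite Eh Ep; apply/esym; rewrite scalerDr addrA addrAC -(addrA m) subrK addrAC.
have tM : q - c *: w \in M.
  have -> : q - c *: w = h - c *: (u + w) - m.
    by rewrite Eh' addrK [m + _]addrC addrK.
  by rewrite memvB // memvB ?memvZ // (subvP sHM).
rewrite Eh' memv_add ?memvZ ?memv_line // memv_add // memv_cap ?mU ?tM //.
by rewrite memvB ?memvZ.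
Qed.

Lemma notin_addv_of_capv H X W x y : (H <= X)%VS -> (X :&: W <= H)%VS ->
  x \in X -> x \notin H -> x - y \in W -> y \notin (H + W)%VS.
Proof.
move=> sHX sXWH xX xH xyW; apply/negP=> /memv_addP[h hH [v vW Ey]].
have xhH : x - h \in H.
  apply: (subvP sXWH); rewrite memv_cap memvB ?(subvP sHX _ hH) //=.
  have -> : x - h = x - y + v by rewrite Ey opprD addrA subrK.
  exact: memvD.
by move: xH; rewrite -[x](subrK h) memvD.
Qed.

Lemma notin_min_level H X Xk U W u w : (Xk <= H)%VS -> (H <= X)%VS ->
  (X :&: W :&: (Xk + U) <= H)%VS -> u \in U -> w \in W -> w \in X ->
  w \notin H -> u + w \in H -> u \notin (H + U :&: (Xk + W))%VS.
Proof.
move=> sXkH sHX minXk uU wW wX wH uwH.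
apply/negP=> /memv_addP[h hH [p /memv_capP[pU /memv_addP[y yXk [v vW Ep]]] Eu]].
have yH : y \in H := subvP sXkH y yXk.
have wvH : w + v \in H.
  have -> : w + v = u + w - (h + y).
    by rewrite Eu Ep addrAC addrA [h + y + v - _]addrAC subrr add0r addrC.
  by rewrite memvB // memvD.
have vH : v \in H.
  apply: (subvP minXk); rewrite !memv_cap vW andbT.
  apply/andP; split; first by rewrite -[v](addKr w) memvD ?memvN // (subvP sHX).
  by rewrite -[v](addKr y) -Ep memv_add ?memvN.
by move: wH; rewrite -[w](addrK v) memvB.
Qed.

Lemma span_take_insert s k j x : (k <= size s)%N -> (k <= j)%N ->
  <<take j.+1 (take k s ++ x :: drop k s)>>%VS = (<<take j s>> + <[x]>)%VS.
Proof.
move=> ks kj; rewrite take_cat size_takel // ltnNge (leqW kj) subSn //=.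
rewrite -{2}(subnKC kj) takeD !span_cat span_cons.
by rewrite [(<[x]> + _)%VS]addvC addvA.
Qed.

End Subspaces.

Section Flags.
Variables (F : fieldType) (V : vectType F).
Implicit Types (U W Z : {vspace V}) (X Y : nat -> {vspace V}) (E : seq V) (a b u w z : V).

Definition partial_flag X m :=
  (forall k, (k <= m)%N -> \dim (X k) = k) /\
  (forall k, (k < m)%N -> (X k <= X k.+1)%VS).

Lemma partial_flag_pred X m : partial_flag X m.+1 -> partial_flag X m.
Proof.
by case=> dX sX; split=> k km; [apply: dX; apply: leqW | apply: sX; apply: ltnW].
Qed.

Lemma partial_flag_mono X m i j : partial_flag X m ->
  (i <= j)%N -> (j <= m)%N -> (X i <= X j)%VS.
Proof.
case=> _ sX; elim: j => [|j IHj]; first by rewrite leqn0 => /eqP-> _.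
rewrite leq_eqVlt => /orP[/eqP-> // | ]; rewrite ltnS => ij jm.
exact: subv_trans (IHj ij (ltnW jm)) (sX _ jm).
Qed.

Lemma partial_flag0 X m : partial_flag X m -> X 0 = 0%VS.
Proof. by case=> dX _; apply/eqP; rewrite -dimv_eq0 dX. Qed.

Lemma partial_flag_new X m :
  partial_flag X m.+1 -> exists2 x, x \in X m.+1 & x \notin X m.
Proof.
by case=> dX sX; apply/subvPn/negP => /dimvS; rewrite !dX // ltnn.
Qed.

Lemma partial_flag_line X n m x : partial_flag X n -> (m < n)%N ->
  x \in X m.+1 -> x \notin X m -> X m.+1 = (X m + <[x]>)%VS.
Proof. by case=> dX sX mn xX xX'; apply: addv_line_eq; rewrite ?dX ?sX // ltnW. Qed.

Lemma partial_flag_splice X n Z z k : partial_flag X n.+1 -> (k <= n)%N ->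
  (X k <= Z)%VS -> z \in X k.+1 -> z \notin Z -> (X n.+1 <= Z + <[z]>)%VS ->
  exists Y, [/\ partial_flag Y n, (Y n <= Z)%VS,
    forall j, (j <= k)%N -> X j = Y j
    & forall j, (k <= j <= n)%N -> X j.+1 = (Y j + <[z]>)%VS].
Proof.
move=> fX kn sXkZ zXk zZ sXZ.
pose Y j := if (j <= k)%N then X j else (X j.+1 :&: Z)%VS.
have sYZ j : (Y j <= Z)%VS.
  rewrite /Y; case: leqP => [jk | _]; last exact: capvSr.
  exact: subv_trans (partial_flag_mono fX jk (leqW kn)) sXkZ.
have zY j : z \notin Y j by apply: contra zZ; apply: subvP.
have XY j : (k <= j <= n)%N -> X j.+1 = (Y j + <[z]>)%VS.
  case/andP=> kj jn; rewrite /Y; case: leqP => [jk | kj'].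
    have -> : j = k by apply/eqP; rewrite eqn_leq jk.
    apply: partial_flag_line fX _ zXk _; rewrite ?ltnS //.
    by apply: contra zZ; apply: subvP.
  apply: addv_capv_modular; last exact: subv_trans (partial_flag_mono fX _ _) sXZ.
  by rewrite -memvE (subvP (partial_flag_mono (i := k.+1) (j := j.+1) fX (ltnW kj') jn)).
exists Y; split=> //; last by move=> j jk; rewrite /Y jk.
split=> j jn.
  case: (leqP j k) => [jk | kj]; first by rewrite /Y jk; apply: fX.1; apply: leqW.
  have := fX.1 j.+1 jn; rewrite XY ?(ltnW kj) ?jn // dimv_add_line //.
  by case.
case: (ltnP j k) => [jk | kj].
  by rewrite /Y (ltnW jk) jk; apply: fX.2; apply: leqW.
have -> : Y j.+1 = (X j.+2 :&: Z)%VS by rewrite /Y ltnNge kj.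
rewrite subv_cap sYZ andbT; apply: subv_trans (fX.2 j.+1 jn).
by rewrite XY ?kj ?(ltnW jn) // addvSl.
Qed.


Definition free_in U E := free E && (<<E>> <= U)%VS.

Definition zero_or_in E (x : V) := (x == 0) || (x \in E).

Definition cons_nz (a : V) E := if a == 0 then E else a :: E.

Lemma zero_or_in_cons_nz a E x : zero_or_in E x -> zero_or_in (cons_nz a E) x.
Proof.
rewrite /zero_or_in /cons_nz => /orP[-> // | xE].
by case: (a == 0); rewrite ?in_cons xE !orbT.
Qed.

Lemma zero_or_in_cons_nz_self a E : zero_or_in (cons_nz a E) a.
Proof.
by rewrite /zero_or_in /cons_nz; case: (a == 0) / eqP; rewrite ?mem_head ?orbT.
Qed.

Lemma free_in_cons_nz U U' E a : (U' <= U)%VS -> free_in U' E -> a \in U ->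
  (a == 0) || (a \notin U') -> free_in U (cons_nz a E).
Proof.
rewrite /free_in /cons_nz => sU /andP[fE sEU'] aU; case: (a == 0) => /= [_ | aU'].
  by rewrite fE (subv_trans sEU').
rewrite free_cons fE span_cons subv_add -memvE aU (subv_trans sEU') // !andbT.
by apply: contra aU'; apply: subvP.
Qed.

Definition rows_over EU EW (rows : seq (V * V)) :=
  all (fun p => zero_or_in EU p.1 && zero_or_in EW p.2) rows.

Record flag_split U W X m (rows : seq (V * V)) EU EW : Prop := FlagSplit {
  flag_split_size : size rows = m;
  flag_split_freeU : free_in U EU;
  flag_split_freeW : free_in W EW;
  flag_split_rows : rows_over EU EW rows;
  flag_split_span : forall k, (k <= m)%N ->
    X k = <<take k [seq (p.1 + p.2)%R | p <- rows]>>%VS }.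

Lemma flag_split0 U W X : partial_flag X 0 -> flag_split U W X 0 [::] [::] [::].
Proof.
move=> fX; split; rewrite /free_in ?nil_free ?span_nil ?sub0v //.
by move=> k; rewrite leqn0 => /eqP->; rewrite span_nil (partial_flag0 fX).
Qed.

Lemma flag_split_extend U W U' W' X m rows EU EW a b :
  (U' <= U)%VS -> (W' <= W)%VS -> a \in U -> b \in W ->
  (a == 0) || (a \notin U') -> (b == 0) || (b \notin W') ->
  flag_split U' W' X m rows EU EW ->
  flag_split U W X m rows (cons_nz a EU) (cons_nz b EW).
Proof.
move=> sU sW aU bW aU' bW' [sz fU fW rws spn]; split=> //.
- exact: free_in_cons_nz fU aU aU'.
- exact: free_in_cons_nz fW bW bW'.
apply: sub_all rws => p /andP[p1 p2].
by rewrite !zero_or_in_cons_nz.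
Qed.

Lemma flag_split_insert U W X Y n rows EU EW k a b : (k <= n)%N ->
  zero_or_in EU a -> zero_or_in EW b ->
  (forall j, (j <= k)%N -> X j = Y j) ->
  (forall j, (k <= j <= n)%N -> X j.+1 = (Y j + <[a + b]>)%VS) ->
  flag_split U W Y n rows EU EW ->
  flag_split U W X n.+1 (take k rows ++ (a, b) :: drop k rows) EU EW.
Proof.
move=> kn aE bE XY XY' [sz fU fW rws spn].
have kr : (k <= size rows)%N by rewrite sz.
split=> //.
- by rewrite size_cat /= addnS -size_cat cat_take_drop sz.
- by rewrite /rows_over all_cat /= aE bE /= -all_cat cat_take_drop.
move=> j jn; rewrite map_cat /= map_take map_drop.
case: (leqP j k) => [jk | kj].
  rewrite XY // spn ?(leq_trans jk) // takel_cat ?size_takel ?size_map ?sz //.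
  by rewrite take_takel.
case: j jn kj => // j jn kj.
rewrite XY' ?spn ?span_take_insert ?size_map ?sz //; exact/andP.
Qed.

Definition flag_splittable X m := forall U W, (U :&: W = 0)%VS ->
  (X m <= U + W)%VS -> exists rows EU EW, flag_split U W X m rows EU EW.

Lemma simple_step_witness U W X m : partial_flag X m.+1 ->
  (X m.+1 <= U + W)%VS -> (X m.+1 :&: U <= X m)%VS || (X m.+1 :&: W <= X m)%VS ->
  exists a b, [/\ a \in U, b \in W, a + b \in X m.+1, a + b \notin X m &
    ((a == 0) || (a \notin (X m + W)%VS)) && ((b == 0) || (b \notin (X m + U)%VS))].
Proof.
move=> fX sXUW grow; have sH : (X m <= X m.+1)%VS := fX.2 m (ltnSn m).
have [sW | /subvPn[b /memv_capP[bX bW] bH]] := boolP (X m.+1 :&: W <= X m)%VS.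
  have [sU | /subvPn[a /memv_capP[aX aU] aH]] := boolP (X m.+1 :&: U <= X m)%VS.
    have [x xX xH] := partial_flag_new fX.
    have /memv_addP[a aU [b bW Ex]] := subvP sXUW x xX.
    exists a, b; rewrite -Ex; split=> //.
    rewrite (notin_addv_of_capv sH sW xX xH) ?(notin_addv_of_capv sH sU xX xH) ?orbT //.
      by rewrite Ex addrK.
    by rewrite Ex (addrC a) addrK.
  exists a, 0; rewrite addr0 mem0v eqxx andbT; split=> //.
  by rewrite (notin_addv_of_capv sH sW aX aH) ?orbT // subrr mem0v.
case/orP: grow => [sU | sW]; last by case/negP: bH; rewrite (subvP sW) // memv_cap bX.
exists 0, b; rewrite add0r mem0v eqxx /=; split=> //.
by rewrite (notin_addv_of_capv sH sU bX bH) ?orbT // subrr mem0v.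
Qed.

Lemma flag_split_simple_step U W X m a b : (U :&: W = 0)%VS ->
  partial_flag X m.+1 -> (X m <= U + W)%VS -> flag_splittable X m ->
  a \in U -> b \in W -> a + b \in X m.+1 -> a + b \notin X m ->
  (a == 0) || (a \notin (X m + W)%VS) -> (b == 0) || (b \notin (X m + U)%VS) ->
  exists rows EU EW, flag_split U W X m.+1 rows EU EW.
Proof.
move=> dUW fX sXUW IH aU bW abX abX' aH bH.
have [U' [sU aU' sXU'W]] := shrink_summand sXUW aH.
have bH' : (b == 0) || (b \notin (X m + U')%VS).
  case/orP: bH => [-> // | bH]; apply/orP; right.
  by apply: contra bH; apply: subvP; rewrite addvS.
have sXWU' : (X m <= W + U')%VS by rewrite addvC.
have [W' [sW bW' sXW'U']] := shrink_summand sXWU' bH'.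
have dU'W' : (U' :&: W' = 0)%VS by apply/eqP; rewrite -subv0 -dUW capvS.
have [rows [EU [EW sp]]] : exists rows EU EW, flag_split U' W' X m rows EU EW.
  by apply: IH dU'W' _; rewrite addvC.
exists (take m rows ++ (a, b) :: drop m rows), (cons_nz a EU), (cons_nz b EW).
apply: flag_split_insert (flag_split_extend sU sW aU bW aU' bW' sp) => //.
- exact: zero_or_in_cons_nz_self.
- exact: zero_or_in_cons_nz_self.
move=> j /andP[mj jm]; have -> : j = m by apply/eqP; rewrite eqn_leq jm.
exact: partial_flag_line fX (ltnSn m) abX abX'.
Qed.

Lemma hard_step_witness U W X m : (U :&: W = 0)%VS -> partial_flag X m.+1 ->
  ~~ (X m.+1 :&: U <= X m)%VS -> ~~ (X m.+1 :&: W <= X m)%VS ->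
  exists k u w, [/\ (k < m)%N, u \in U, w \in W, u + w \in X k.+1 &
    [/\ w \in X m.+1, w \notin X m & u \notin (X m + U :&: (X k + W))%VS]].
Proof.
move=> dUW fX /subvPn[a /memv_capP[aX aU] aH] /subvPn[b /memv_capP[bX bW] bH].
pose P j := ~~ (X m.+1 :&: W :&: (X j + U) <= X m)%VS.
have Pm : P m.
  apply/subvPn; exists b => //; rewrite !memv_cap bX bW /=.
  move: bX; rewrite (partial_flag_line fX (ltnSn m) aX aH).
  by apply: subvP; rewrite addvS // -memvE.
have [r Pr min_r] := ex_minnP (ex_intro P m Pm).
case: r Pr min_r => [|k] Pr min_r.
  case/negP: Pr; rewrite (partial_flag0 fX) add0v -capvA [(W :&: U)%VS]capvC dUW.
  by rewrite capv0 sub0v.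
have notPk : ~~ P k by apply/negP => /min_r; rewrite ltnn.
case/subvPn: Pr => w /memv_capP[/memv_capP[wX wW] /memv_addP[z zX [u1 u1U Ew]]] wH.
have km : (k < m)%N := min_r m Pm.
have zH : z \in X m := subvP (partial_flag_mono fX km (leqW (leqnn m))) z zX.
have Ez : - u1 + w = z by rewrite Ew (addrC z) addKr.
exists k, (- u1), w; rewrite Ez memvN; split=> //; split=> //.
apply: notin_min_level (negbNE notPk) _ wW wX wH _; rewrite ?memvN ?Ez //.
  exact: partial_flag_mono fX (ltnW km) (leqW (leqnn m)).
exact: fX.2.
Qed.

Lemma flag_split_hard_step U W X m k u w : (U :&: W = 0)%VS ->
  partial_flag X m.+1 -> (X m <= U + W)%VS ->
  (forall Y, partial_flag Y m.-1 -> flag_splittable Y m.-1) ->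
  (k < m)%N -> u \in U -> w \in W -> u + w \in X k.+1 ->
  w \in X m.+1 -> w \notin X m -> u \notin (X m + U :&: (X k + W))%VS ->
  exists rows EU EW, flag_split U W X m.+1 rows EU EW.
Proof.
move=> dUW; case: m => // n fX sXUW IH; rewrite ltnS => kn uU wW uwX wX wX' uL.
have [M [sLM uM MuF]] := hyperplane_avoiding uL.
have fX1 := partial_flag_pred fX.
have sHM : (X n.+1 <= M)%VS := subv_trans (addvSl _ _) sLM.
have sXkH : (X k <= X n.+1)%VS := partial_flag_mono fX1 (leqW kn) (leqnn _).
have sXk1H : (X k.+1 <= X n.+1)%VS :=
  partial_flag_mono (i := k.+1) (j := n.+1) fX1 kn (leqnn _).
have uwM : u + w \in M by rewrite (subvP sHM) // (subvP sXk1H).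
have wM : w \notin M by apply: contra uM => wM; rewrite -[u](addrK w) memvB.
have uU' : u \notin (U :&: M)%VS by rewrite memv_cap (negbTE uM) andbF.
have wW' : w \notin (W :&: M)%VS by rewrite memv_cap (negbTE wM) andbF.
have sXkZ : (X k <= U :&: M + W :&: M)%VS.
  apply: subv_addv_capv; first exact: subv_trans sXkH sXUW.
    exact: subv_trans sXkH sHM.
  exact: subv_trans (addvSr _ _) sLM.
have uwZ := notin_addv_summand dUW (capvSl U M) (capvSl W M) uU wW uU'.
have sHZ := subv_capv_add_line sXUW sHM MuF uU wW uwM.
have [Y [fY sYZ XY XY']] := partial_flag_splice fX1 kn sXkZ uwX uwZ sHZ.
have dZ : (U :&: M :&: (W :&: M) = 0)%VS.
  by apply/eqP; rewrite -subv0 -dUW capvS ?capvSl.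
have [rows [EU [EW sp]]] := IH Y fY _ _ dZ sYZ.
have uU'' : (u == 0) || (u \notin (U :&: M)%VS) by rewrite uU' orbT.
have wW'' : (w == 0) || (w \notin (W :&: M)%VS) by rewrite wW' orbT.
have sp1 := flag_split_insert kn (zero_or_in_cons_nz_self u EU)
  (zero_or_in_cons_nz_self w EW) XY XY'
  (flag_split_extend (capvSl U M) (capvSl W M) uU wW uU'' wW'' sp).
eexists _, _, _; apply: (flag_split_insert (k := n.+1) (a := 0) (b := w)) sp1 => //.
- by rewrite /zero_or_in eqxx.
- exact: zero_or_in_cons_nz_self.
move=> j /andP[nj jn]; have -> : j = n.+1 by apply/eqP; rewrite eqn_leq jn.
by rewrite add0r (partial_flag_line fX (ltnSn _) wX wX').
Qed.

Theorem flag_split_exists X m : partial_flag X m -> flag_splittable X m.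
Proof.
elim/ltn_ind: m X => -[|m] IH X fX U W dUW sXUW.
  by exists [::], [::], [::]; apply: flag_split0.
have sXmUW : (X m <= U + W)%VS := subv_trans (fX.2 m (ltnSn m)) sXUW.
have [grow | stay] := boolP (~~ (X m.+1 :&: U <= X m)%VS && ~~ (X m.+1 :&: W <= X m)%VS).
  case/andP: grow => growU growW.
  have [k [u [w [km uU wW uwX [wX wX' uL]]]]] := hard_step_witness dUW fX growU growW.
  apply: flag_split_hard_step dUW fX sXmUW _ km uU wW uwX wX wX' uL.
  by move=> Y fY; apply: IH fY; rewrite ltnS leq_pred.
rewrite negb_and !negbK in stay.
have [a [b [aU bW abX abX' /andP[aH bH]]]] := simple_step_witness fX sXUW stay.
have IHm := IH m (ltnSn m) X (partial_flag_pred fX).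
exact: flag_split_simple_step dUW fX sXmUW IHm aU bW abX abX' aH bH.
Qed.

Lemma basis_extend U E : free_in U E -> basis_of U (E ++ vbasis (U :\: <<E>>)).
Proof.
case/andP=> fE sEU; rewrite -{1}(addv_idPl sEU) -addv_diff addvC.
apply: cat_basis; last exact: vbasisP.
  by apply/directv_addP; rewrite capvC capv_diff.
by rewrite /basis_of eqxx fE.
Qed.

Lemma flag_compatible_take N (Vs : nat -> {vspace V}) (v : N.-tuple V) :
  (forall i, (i <= N)%N -> Vs i = <<take i v>>%VS) -> flag_compatible Vs v.
Proof.
move=> Vs_take i iN; exists [set j : 'I_N | (j < i)%N]; rewrite Vs_take //.
apply: eq_span => x; apply/idP/idP.
  case/(nthP 0); rewrite size_takel ?size_tuple // => k ki <-.
  apply/imageP; exists (Ordinal (leq_trans ki iN)); first by rewrite inE.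
  by rewrite (tnth_nth 0) nth_take.
case/imageP=> j; rewrite inE => ji ->; rewrite (tnth_nth 0) -(nth_take 0 ji).
by apply: mem_nth; rewrite size_takel ?size_tuple.
Qed.

Lemma free_in_decomp_basis U W EU EW : (U :&: W = 0)%VS ->
  free_in U EU -> free_in W EW ->
  exists2 e, basis_of (U + W) e &
    [/\ decomp_compatible U W e, {subset EU <= e} & {subset EW <= e}].
Proof.
move=> dUW fU fW; exists ((EU ++ vbasis (U :\: <<EU>>)) ++ (EW ++ vbasis (W :\: <<EW>>))).
  by apply: cat_basis; rewrite ?basis_extend //; apply/directv_addP.
split=> x; last 2 first.
- by rewrite !mem_cat => ->.
- by rewrite !mem_cat => ->; rewrite !orbT.
rewrite mem_cat => /orP[] xe; [left | right].
  exact: basis_mem (basis_extend fU) xe.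
exact: basis_mem (basis_extend fW) xe.
Qed.

Lemma flag_split_full_basis U W X N rows EU EW :
  \dim (fullv : {vspace V}) = N -> X N = fullv -> flag_split U W X N rows EU EW ->
  basis_of fullv [seq p.1 + p.2 | p <- rows].
Proof.
move=> dimN XN [sz _ _ _ spn]; rewrite basisEdim size_map sz dimN leqnn andbT.
by rewrite -XN spn // take_oversize ?size_map ?sz.
Qed.

Lemma sum_zero_or_in_tnth N (e : N.-tuple V) U W EU EW a b :
  free_in U EU -> free_in W EW -> {subset EU <= e} -> {subset EW <= e} ->
  zero_or_in EU a -> zero_or_in EW b -> a + b != 0 ->
  (exists l, a + b = tnth e l) \/
  (exists j k, [/\ tnth e j \in U, tnth e k \in W & a + b = tnth e j + tnth e k]).
Proof.
move=> /andP[_ /span_subvP sEU] /andP[_ /span_subvP sEW] sUe sWe.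
move=> /orP[/eqP-> | aE] /orP[/eqP-> | bE]; rewrite ?add0r ?addr0 ?eqxx //.
- by left; apply/tnthP; apply: sWe.
- by left; apply/tnthP; apply: sUe.
have [j Ej] := tnthP _ _ (sUe a aE); have [k Ek] := tnthP _ _ (sWe b bE).
by right; exists j, k; rewrite -Ej -Ek sEU ?sEW.
Qed.

End Flags.

Theorem lemma1 (F : fieldType) (V : vectType F) (N : nat)
    (hN : \dim (fullv : {vspace V}) = N)
    (U W : {vspace V}) (hUW : direct_decomposition U W)
    (Vs : nat -> {vspace V}) (hflag : full_flag N Vs) :
  exists (e v : N.-tuple V),
    [/\ basis_of fullv e, basis_of fullv v,
        decomp_compatible U W e,
        flag_compatible Vs v
      & forall i : 'I_N,
          (exists l : 'I_N, tnth v i = tnth e l) \/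
          (exists j k : 'I_N, [/\ tnth e j \in U, tnth e k \in W
                                & tnth v i = tnth e j + tnth e k])].
Proof.
case: hUW => /directv_addP dUW UWf; case: hflag => dVs sVs VsN.
have sVsUW : (Vs N <= U + W)%VS by rewrite VsN UWf.
have [rows [EU [EW sp]]] :=
  flag_split_exists (conj dVs sVs : partial_flag Vs N) dUW sVsUW.
have [sz fU fW rws spn] := sp.
have [e be [ce sUe sWe]] := free_in_decomp_basis dUW fU fW; rewrite UWf in be.
have bv := flag_split_full_basis hN VsN sp.
set v := [seq p.1 + p.2 | p <- rows] in bv spn.
have sze : size e == N by rewrite -hN -(span_basis be) (eqnP (basis_free be)).
have szv : size v == N by rewrite size_map sz.
exists (Tuple sze), (Tuple szv); split=> //; first exact: flag_compatible_take.
move=> i; have vi0 : tnth (Tuple szv) i != 0 := basis_not0 bv (mem_tnth i (Tuple szv)).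
set p := nth (0, 0) rows i.
have /andP[p1 p2] : zero_or_in EU p.1 && zero_or_in EW p.2.
  by apply: (allP rws); rewrite mem_nth ?sz.
rewrite (tnth_nth 0) /= (nth_map (0, 0)) ?sz // in vi0 *.
exact: (@sum_zero_or_in_tnth _ _ N (Tuple sze)) fU fW sUe sWe p1 p2 vi0.
Qed.
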